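(* Let $p \in [0,1]$, $q=1-p$, and let $m, n \geq 1$ be integers. If $X$ is a $\mathrm{Bin}(n, p)$ random variable, then \[ \mathbb{E} |X - np|^{2m} \leq m \max\left(m^{2m-1} npq,\ e^{m-1}(m npq)^m\right). \] In particular, if $Z = X/n$, $\delta\in(0,1]$ and $n \geq 4m/\delta$, then \[ \mathbb{E} |Z - p|^{2m} \leq \delta^m (pq)^m + \delta^{2m-1} pq. \] *)

From Stdlib Require Import Reals Lra Lia.
Open Scope R_scope.

(* Expectation of g(X) for X ~ Bin(n, p):
   E g(X) = sum_{k=0}^{n} C(n,k) p^k (1-p)^(n-k) g(k).
   (sum_f_R0 f n = f 0 + ... + f n.) *)
Definition binom_expect (n : nat) (p : R) (g : nat -> R) : R :=
  sum_f_R0 (fun k => C n k * p ^ k * (1 - p) ^ (n - k) * g k) n.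

(* Write X_(n+1) = X_n + B with B a Bernoulli(p) variable independent of X_n.
   Expanding (X_(n+1) - (n+1) p)^k binomially expresses the central moments
   M_k(n+1) of Bin(n+1, p) through the M_i(n) and the central moments mu_j of B,
   which satisfy mu_0 = 1, mu_1 = 0 and |mu_j| <= p q for j >= 2.  By induction
   on n this gives |M_k(n)| <= P_k(n p q) for the polynomial
   P_k(x) = sum_(2 j <= k) j^k / j! x^j (moment_poly k), whose coefficients
   absorb the recursion.  Since j^j <= j! e^(j-1), each of the m nonzero terms of
   P_(2m)(x) is at most max(m^(2m-1) x, e^(m-1) (m x)^m).  The bound for Z = X / n
   follows by dividing by n^(2m), with m / n <= delta / 4, m <= 4^(2m-1) and
   m e^(m-1) <= 4^m. *)

From Stdlib Require Import Reals Lra Lia Factorial.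
Open Scope R_scope.

Lemma sum_f_R0_comm (f : nat -> nat -> R) (N M : nat) :
  sum_f_R0 (fun i => sum_f_R0 (fun j => f i j) M) N =
  sum_f_R0 (fun j => sum_f_R0 (fun i => f i j) N) M.
Proof.
  induction N as [|N IH]; simpl.
  - apply sum_eq; reflexivity.
  - rewrite IH, <- sum_plus. apply sum_eq; reflexivity.
Qed.

Lemma sum_f_R0_pad (f : nat -> R) (N K : nat) :
  (forall j, (N < j <= N + K)%nat -> f j = 0) ->
  sum_f_R0 f (N + K) = sum_f_R0 f N.
Proof.
  induction K as [|K IH]; intros Hf.
  - now rewrite Nat.add_0_r.
  - rewrite Nat.add_succ_r, tech5, IH.
    + rewrite (Hf (S (N + K))) by lia. ring.
    + intros j Hj. apply Hf. lia.
Qed.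

Lemma sum_f_R0_shift (g : nat -> R) (k : nat) :
  g 0%nat = 0 -> g (S k) = 0 -> sum_f_R0 (fun j => g (S j)) k = sum_f_R0 g k.
Proof.
  intros H0 Hk.
  assert (Hdec := decomp_sum g (S k) (Nat.lt_0_succ k)).
  rewrite tech5, H0, Hk in Hdec. simpl in Hdec. lra.
Qed.

Lemma C_n_0 (n : nat) : C n 0 = 1.
Proof. unfold C. rewrite Nat.sub_0_r. simpl. field. apply INR_fact_neq_0. Qed.

Lemma C_n_n (n : nat) : C n n = 1.
Proof. unfold C. rewrite Nat.sub_diag. simpl. field. apply INR_fact_neq_0. Qed.

Lemma C_nonneg (n k : nat) : 0 <= C n k.
Proof.
  unfold C. apply Rmult_le_pos; [left; apply INR_fact_lt_0|].
  left; apply Rinv_0_lt_compat, Rmult_lt_0_compat; apply INR_fact_lt_0.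
Qed.

Lemma binom_expect_ext (n : nat) (p : R) (f g : nat -> R) :
  (forall i, f i = g i) -> binom_expect n p f = binom_expect n p g.
Proof. intros H. unfold binom_expect. apply sum_eq; intros; now rewrite H. Qed.

Lemma binom_expect_mult_r (n : nat) (p c : R) (f : nat -> R) :
  binom_expect n p (fun i => f i * c) = binom_expect n p f * c.
Proof. unfold binom_expect. rewrite Rmult_comm, scal_sum. apply sum_eq; intros; ring. Qed.

Lemma binom_expect_sum (n : nat) (p : R) (c : nat -> R) (h : nat -> nat -> R) (K : nat) :
  binom_expect n p (fun i => sum_f_R0 (fun j => c j * h j i) K) =
  sum_f_R0 (fun j => c j * binom_expect n p (h j)) K.
Proof.
  unfold binom_expect.
  rewrite (sum_eq _ (fun i => sum_f_R0
    (fun j => c j * h j i * (C n i * p ^ i * (1 - p) ^ (n - i))) K))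
    by (intros; rewrite <- scal_sum; ring).
  rewrite sum_f_R0_comm. apply sum_eq. intros j _.
  rewrite scal_sum. apply sum_eq; intros; ring.
Qed.

(* Conditioning on the last of the [S n] Bernoulli trials. *)
Lemma binom_expect_S (n : nat) (p : R) (g : nat -> R) :
  binom_expect (S n) p g =
  p * binom_expect n p (fun i => g (S i)) + (1 - p) * binom_expect n p g.
Proof.
  unfold binom_expect. set (q := 1 - p).
  destruct n as [|n]; [simpl; rewrite !C_n_0, (C_n_n 1); ring|].
  rewrite decomp_sum by lia. simpl pred. rewrite tech5.
  rewrite (tech5 (fun i => C (S n) i * p ^ i * q ^ (S n - i) * g (S i))).
  rewrite (decomp_sum (fun i => C (S n) i * p ^ i * q ^ (S n - i) * g i)) by lia.
  simpl pred.
  rewrite (sum_eq (fun i => C (S (S n)) (S i) * p ^ S i * q ^ (S (S n) - S i) * g (S i))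
    (fun i => C (S n) i * p ^ i * q ^ (S n - i) * g (S i) * p
              + C (S n) (S i) * p ^ S i * q ^ (S n - S i) * g (S i) * q)).
  2:{ intros i Hi. rewrite <- pascal by lia.
      replace (S (S n) - S i)%nat with (S (n - i)) by lia.
      replace (S n - i)%nat with (S (n - i)) by lia.
      simpl pow. simpl minus. ring. }
  rewrite sum_plus, <- !scal_sum, !C_n_0, !C_n_n, !Nat.sub_diag, !Nat.sub_0_r.
  simpl pow. ring.
Qed.

Definition central_moment (n : nat) (p : R) (k : nat) : R :=
  binom_expect n p (fun i => (INR i - INR n * p) ^ k).

Definition bernoulli_central_moment (p : R) (j : nat) : R :=
  p * (1 - p) ^ j + (1 - p) * (- p) ^ j.

Lemma central_moment_S (n : nat) (p : R) (k : nat) :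
  central_moment (S n) p k =
  sum_f_R0 (fun j => C k j * bernoulli_central_moment p j * central_moment n p (k - j)) k.
Proof.
  unfold central_moment. rewrite binom_expect_S.
  rewrite (binom_expect_ext n p _ (fun i => sum_f_R0
    (fun j => C k j * (1 - p) ^ j * (INR i - INR n * p) ^ (k - j)) k)).
  2:{ intros i. rewrite <- binomial. f_equal. rewrite !S_INR. ring. }
  rewrite (binom_expect_ext n p (fun i => (INR i - INR (S n) * p) ^ k) (fun i => sum_f_R0
    (fun j => C k j * (- p) ^ j * (INR i - INR n * p) ^ (k - j)) k)).
  2:{ intros i. rewrite <- binomial. f_equal. rewrite !S_INR. ring. }
  rewrite !binom_expect_sum, !scal_sum, <- sum_plus.
  apply sum_eq. intros j _. unfold bernoulli_central_moment. ring.
Qed.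

Definition bernoulli_majorant (y : R) (j : nat) : R :=
  match j with 0 => 1 | 1 => 0 | _ => y end.

Lemma Rabs_bernoulli_central_moment_le (p : R) (j : nat) : 0 <= p <= 1 ->
  Rabs (bernoulli_central_moment p j) <= bernoulli_majorant (p * (1 - p)) j.
Proof.
  intros Hp. unfold bernoulli_central_moment, bernoulli_majorant.
  destruct j as [|[|j]].
  - simpl. rewrite Rabs_right; lra.
  - simpl. replace (p * ((1 - p) * 1) + (1 - p) * (- p * 1)) with 0 by ring.
    rewrite Rabs_R0. lra.
  - eapply Rle_trans; [apply Rabs_triang|].
    rewrite !Rabs_mult, <- !RPow_abs, Rabs_Ropp, (Rabs_right p), (Rabs_right (1 - p)) by lra.
    assert (Hq : (1 - p) ^ j <= 1 ^ j) by (apply pow_incr; lra).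
    assert (Hp' : p ^ j <= 1 ^ j) by (apply pow_incr; lra).
    rewrite pow1 in Hq, Hp'.
    assert (Hq0 : 0 <= (1 - p) ^ j) by (apply pow_le; lra).
    assert (Hp0 : 0 <= p ^ j) by (apply pow_le; lra).
    assert (Hpq : 0 <= p * (1 - p)) by nra.
    assert (Hq1 : (1 - p) * (1 - p) ^ j <= 1 - p) by nra.
    assert (Hp1 : p * p ^ j <= p) by nra.
    simpl pow. nra.
Qed.

Definition moment_coef (k j : nat) : R :=
  if Nat.leb (2 * j) k then INR j ^ k / INR (fact j) else 0.

Definition moment_poly (k : nat) (x : R) : R :=
  sum_f_R0 (fun j => moment_coef k j * x ^ j) k.

Lemma moment_coef_val (k j : nat) :
  (2 * j <= k)%nat -> moment_coef k j = INR j ^ k / INR (fact j).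
Proof. intros H. unfold moment_coef. now rewrite (proj2 (Nat.leb_le _ _) H). Qed.

Lemma moment_coef_zero (k j : nat) : (k < 2 * j)%nat -> moment_coef k j = 0.
Proof. intros H. unfold moment_coef. now rewrite (proj2 (Nat.leb_gt _ _) H). Qed.

Lemma moment_coef_bounds (k j : nat) : 0 <= moment_coef k j <= INR j ^ k / INR (fact j).
Proof.
  assert (0 <= INR j ^ k / INR (fact j)).
  { apply Rmult_le_pos; [apply pow_le, pos_INR|].
    left; apply Rinv_0_lt_compat, INR_fact_lt_0. }
  unfold moment_coef; destruct (Nat.leb (2 * j) k); lra.
Qed.

Lemma moment_poly_pad (k i : nat) (x : R) : (i <= k)%nat ->
  moment_poly (k - i) x = sum_f_R0 (fun j => moment_coef (k - i) j * x ^ j) k.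
Proof.
  intros H. unfold moment_poly.
  replace k with ((k - i) + i)%nat at 2 by lia.
  rewrite sum_f_R0_pad; [reflexivity|].
  intros j Hj. rewrite moment_coef_zero by lia. ring.
Qed.

Lemma moment_poly_0 (k : nat) : moment_poly k 0 = 0 ^ k.
Proof.
  unfold moment_poly.
  pose proof (sum_f_R0_pad (fun j => moment_coef k j * 0 ^ j) 0 k) as Hpad.
  rewrite Nat.add_0_l in Hpad. rewrite Hpad.
  - simpl. rewrite moment_coef_val by lia. simpl. field.
  - intros j Hj. rewrite pow_i by lia. ring.
Qed.

Lemma pow_add_ge_two_terms (x y : R) (j : nat) : 0 <= x -> 0 <= y ->
  x ^ j + INR j * y * x ^ (j - 1) <= (x + y) ^ j.
Proof.
  intros Hx Hy. induction j as [|[|j] IH]; [simpl; lra | simpl; lra |].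
  replace (S (S j) - 1)%nat with (S j) by lia.
  replace (S j - 1)%nat with j in IH by lia.
  apply Rle_trans with ((x + y) * (x ^ S j + INR (S j) * y * x ^ j));
    [|change ((x + y) ^ S (S j)) with ((x + y) * (x + y) ^ S j);
      apply Rmult_le_compat_l; lra].
  assert (0 <= x ^ j) by (apply pow_le; lra).
  assert (0 <= INR (S j) * y * y * x ^ j) by (repeat apply Rmult_le_pos; try apply pos_INR; lra).
  rewrite !S_INR in *. simpl pow. nra.
Qed.

Lemma binomial_drop_two_le (k : nat) (x : R) : 0 <= x ->
  sum_f_R0 (fun i => C (S (S k)) (S (S i)) * x ^ (k - i)) k <= (1 + x) ^ S (S k).
Proof.
  intros Hx.
  rewrite binomial, (decomp_sum _ (S (S k))) by lia. simpl pred.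
  rewrite (decomp_sum _ (S k)) by lia. simpl pred.
  rewrite (sum_eq (fun i => C (S (S k)) (S (S i)) * 1 ^ S (S i) * x ^ (S (S k) - S (S i)))
    (fun i => C (S (S k)) (S (S i)) * x ^ (k - i))) by (intros; rewrite pow1; simpl; ring).
  assert (Hterm : forall i, 0 <= C (S (S k)) i * 1 ^ i * x ^ (S (S k) - i)).
  { intros i. rewrite pow1, Rmult_1_r. apply Rmult_le_pos; [apply C_nonneg | now apply pow_le]. }
  pose proof (Hterm 0%nat). pose proof (Hterm 1%nat). lra.
Qed.

Lemma moment_coef_tail_le (k j : nat) :
  sum_f_R0 (fun i => C (S (S k)) (S (S i)) * moment_coef (k - i) j) k
    <= INR (S j) * moment_coef (S (S k)) (S j).
Proof.
  destruct (Compare_dec.le_lt_dec (2 * j) k) as [Hj|Hj].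
  2:{ rewrite (moment_coef_zero _ (S j)) by lia.
      rewrite sum_eq_R0; [lra|].
      intros i _. rewrite moment_coef_zero by lia. ring. }
  set (F := INR (fact j)). assert (HF : 0 < F) by apply INR_fact_lt_0.
  replace (INR (S j) * moment_coef (S (S k)) (S j)) with ((1 + INR j) ^ S (S k) / F).
  2:{ rewrite moment_coef_val by lia. unfold F.
      replace (fact (S j)) with (S j * fact j)%nat by reflexivity.
      rewrite mult_INR, S_INR, (Rplus_comm (INR j) 1). field.
      split; [apply INR_fact_neq_0 | pose proof (pos_INR j); lra]. }
  apply Rle_trans with (sum_f_R0 (fun i => C (S (S k)) (S (S i)) * INR j ^ (k - i)) k / F).
  - unfold Rdiv. rewrite Rmult_comm, scal_sum. apply sum_Rle. intros i _.
    pose proof (C_nonneg (S (S k)) (S (S i))) as HC.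
    pose proof (moment_coef_bounds (k - i) j) as Hc. fold F in Hc.
    rewrite Rmult_assoc. apply Rmult_le_compat_l; lra.
  - apply Rmult_le_compat_r; [left; now apply Rinv_0_lt_compat|].
    apply binomial_drop_two_le, pos_INR.
Qed.

Lemma moment_coef_convolution_le (k j : nat) (y : R) : 0 <= y ->
  sum_f_R0 (fun i => C k i * bernoulli_majorant y i * moment_coef (k - i) j) k
    <= moment_coef k j + INR (S j) * moment_coef k (S j) * y.
Proof.
  intros Hy.
  assert (Hnext : 0 <= INR (S j) * moment_coef k (S j) * y).
  { pose proof (moment_coef_bounds k (S j)). pose proof (pos_INR (S j)).
    apply Rmult_le_pos; [apply Rmult_le_pos|]; lra. }
  destruct k as [|[|k]].
  - cbn [sum_f_R0 bernoulli_majorant Nat.sub]. rewrite C_n_0. lra.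
  - cbn [sum_f_R0 bernoulli_majorant Nat.sub]. rewrite C_n_0, C_n_n. lra.
  - rewrite (decomp_sum _ (S (S k))) by lia. simpl pred.
    rewrite (decomp_sum _ (S k)) by lia. simpl pred. simpl bernoulli_majorant.
    rewrite (sum_eq _ (fun i => C (S (S k)) (S (S i)) * moment_coef (k - i) j * y))
      by (intros; simpl; ring).
    rewrite <- scal_sum, C_n_0, Nat.sub_0_r.
    assert (y * sum_f_R0 (fun i => C (S (S k)) (S (S i)) * moment_coef (k - i) j) k
            <= y * (INR (S j) * moment_coef (S (S k)) (S j)))
      by (apply Rmult_le_compat_l; [exact Hy | apply moment_coef_tail_le]).
    lra.
Qed.

(* Coefficientwise comparison; the cross term is absorbed by
   [x^j + j y x^(j-1) <= (x+y)^j] after shifting the index. *)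
Lemma moment_poly_step (k : nat) (x y : R) : 0 <= x -> 0 <= y ->
  sum_f_R0 (fun i => C k i * bernoulli_majorant y i * moment_poly (k - i) x) k
    <= moment_poly k (x + y).
Proof.
  intros Hx Hy.
  rewrite (sum_eq _ (fun i => sum_f_R0
    (fun j => C k i * bernoulli_majorant y i * moment_coef (k - i) j * x ^ j) k)).
  2:{ intros i Hi. rewrite moment_poly_pad, scal_sum by exact Hi. apply sum_eq; intros; ring. }
  rewrite sum_f_R0_comm.
  apply Rle_trans with (sum_f_R0 (fun j => moment_coef k j * x ^ j
    + INR (S j) * moment_coef k (S j) * y * x ^ (S j - 1)) k).
  { apply sum_Rle. intros j _. rewrite <- scal_sum, Rmult_comm, Nat.sub_succ, Nat.sub_0_r.
    replace (moment_coef k j * x ^ j + INR (S j) * moment_coef k (S j) * y * x ^ j)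
      with ((moment_coef k j + INR (S j) * moment_coef k (S j) * y) * x ^ j) by ring.
    apply Rmult_le_compat_r; [now apply pow_le | now apply moment_coef_convolution_le]. }
  rewrite sum_plus, (sum_f_R0_shift (fun j => INR j * moment_coef k j * y * x ^ (j - 1))).
  2:{ simpl. ring. }
  2:{ rewrite moment_coef_zero by lia. ring. }
  rewrite <- sum_plus. unfold moment_poly. apply sum_Rle. intros j _.
  pose proof (pow_add_ge_two_terms x y j Hx Hy). pose proof (moment_coef_bounds k j).
  replace (moment_coef k j * x ^ j + INR j * moment_coef k j * y * x ^ (j - 1))
    with (moment_coef k j * (x ^ j + INR j * y * x ^ (j - 1))) by ring.
  apply Rmult_le_compat_l; lra.
Qed.

Lemma Rabs_central_moment_le (n : nat) (p : R) (k : nat) : 0 <= p <= 1 ->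
  Rabs (central_moment n p k) <= moment_poly k (INR n * (p * (1 - p))).
Proof.
  intros Hp. set (y := p * (1 - p)). assert (Hy : 0 <= y) by (unfold y; nra).
  revert k. induction n as [|n IH]; intros k.
  - rewrite Rmult_0_l, moment_poly_0.
    unfold central_moment, binom_expect. cbn [sum_f_R0 pow INR Nat.sub].
    rewrite C_n_0, Rmult_0_l, Rminus_0_r, !Rmult_1_l.
    rewrite Rabs_right by (apply Rle_ge, pow_le; lra). lra.
  - rewrite central_moment_S, S_INR, Rmult_plus_distr_r, Rmult_1_l.
    eapply Rle_trans; [apply sum_f_R0_triangle|].
    eapply Rle_trans; [|apply moment_poly_step; [apply Rmult_le_pos; [apply pos_INR|]|]; lra].
    apply sum_Rle. intros j _.
    rewrite !Rabs_mult, (Rabs_right (C k j)) by (apply Rle_ge, C_nonneg).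
    pose proof (C_nonneg k j).
    apply Rmult_le_compat; [apply Rmult_le_pos; [lra | apply Rabs_pos] | apply Rabs_pos | |apply IH].
    apply Rmult_le_compat_l; [lra | now apply Rabs_bernoulli_central_moment_le].
Qed.

Lemma exp_pow (x : R) (n : nat) : exp x ^ n = exp (INR n * x).
Proof.
  induction n as [|n IH]; [simpl; now rewrite Rmult_0_l, exp_0|].
  simpl pow. rewrite IH, S_INR, <- exp_plus. f_equal; ring.
Qed.

Lemma pow_1_plus_le_exp (t : R) (n : nat) : 0 <= t -> (1 + t) ^ n <= exp (INR n * t).
Proof.
  intros Ht. rewrite <- exp_pow. apply pow_incr. split; [lra | apply exp_ineq1_le].
Qed.

Lemma pow_plus_1_le_exp (a : R) (n : nat) : 0 < a -> (a + 1) ^ n <= exp (INR n / a) * a ^ n.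
Proof.
  intros Ha. replace (a + 1) with (a * (1 + / a)) by (field; lra).
  rewrite Rpow_mult_distr, Rmult_comm. apply Rmult_le_compat_r; [apply pow_le; lra|].
  apply pow_1_plus_le_exp. left; now apply Rinv_0_lt_compat.
Qed.

Lemma pow_le_fact_exp (j : nat) : INR (S j) ^ S j <= INR (fact (S j)) * exp (INR j).
Proof.
  induction j as [|j IH]; [simpl; rewrite exp_0; lra|].
  assert (Ha : 0 < INR (S j)) by (apply lt_0_INR; lia).
  assert (Hstep : (INR (S j) + 1) ^ S j <= exp 1 * INR (S j) ^ S j).
  { pose proof (pow_plus_1_le_exp (INR (S j)) (S j) Ha) as H.
    now rewrite Rdiv_diag in H by lra. }
  assert (Hexp : exp (INR (S j)) = exp (INR j) * exp 1) by (rewrite S_INR; apply exp_plus).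
  assert (He : 0 < exp 1) by apply exp_pos.
  change (fact (S (S j))) with (S (S j) * fact (S j))%nat.
  rewrite Hexp, mult_INR, (S_INR (S j)).
  change ((INR (S j) + 1) ^ S (S j)) with ((INR (S j) + 1) * (INR (S j) + 1) ^ S j).
  apply Rle_trans with ((INR (S j) + 1) * (exp 1 * INR (S j) ^ S j));
    [apply Rmult_le_compat_l; lra|].
  replace ((INR (S j) + 1) * INR (fact (S j)) * (exp (INR j) * exp 1))
    with ((INR (S j) + 1) * (exp 1 * (INR (fact (S j)) * exp (INR j)))) by ring.
  apply Rmult_le_compat_l; [lra|]. now apply Rmult_le_compat_l; [lra|].
Qed.

Lemma pow_div_fact_le (j m : nat) : (1 <= j <= m)%nat ->
  INR j ^ (2 * m) / INR (fact j) <= exp (INR j - 1) * INR m ^ (2 * m - j).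
Proof.
  intros Hjm. destruct j as [|a]; [lia|].
  replace (INR (S a) - 1) with (INR a) by (rewrite S_INR; ring).
  replace (2 * m)%nat with (S a + (2 * m - S a))%nat at 1 by lia.
  rewrite pow_add.
  assert (HF : 0 < INR (fact (S a))) by apply INR_fact_lt_0.
  assert (Hm : INR (S a) ^ (2 * m - S a) <= INR m ^ (2 * m - S a))
    by (apply pow_incr; split; [apply pos_INR | apply le_INR; lia]).
  pose proof (pow_le_fact_exp a) as Hfact.
  pose proof (pow_le (INR (S a)) (2 * m - S a) (pos_INR _)).
  apply Rle_trans with (INR (fact (S a)) * exp (INR a) * INR (S a) ^ (2 * m - S a)
                        / INR (fact (S a))).
  - unfold Rdiv. apply Rmult_le_compat_r; [left; now apply Rinv_0_lt_compat|].
    now apply Rmult_le_compat_r.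
  - replace (INR (fact (S a)) * exp (INR a) * INR (S a) ^ (2 * m - S a) / INR (fact (S a)))
      with (exp (INR a) * INR (S a) ^ (2 * m - S a)) by (field; lra).
    apply Rmult_le_compat_l; [left; apply exp_pos | exact Hm].
Qed.

(* Split according to whether [e x <= m]: the term is then dominated by its
   value at [j = 1], respectively at [j = m]. *)
Lemma exp_pow_le_Rmax (j m : nat) (x : R) : (1 <= j <= m)%nat -> 0 <= x ->
  exp (INR j - 1) * INR m ^ (2 * m - j) * x ^ j
    <= Rmax (INR m ^ (2 * m - 1) * x) (exp (INR m - 1) * (INR m * x) ^ m).
Proof.
  intros Hjm Hx. destruct j as [|a]; [lia|].
  destruct (Nat.le_exists_sub (S a) m (proj2 Hjm)) as [b [Hb _]].
  assert (HE : exp (INR (S a) - 1) = exp 1 ^ a)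
    by (rewrite exp_pow, S_INR; f_equal; ring).
  rewrite HE. set (E := exp 1). assert (HE0 : 0 < E) by apply exp_pos.
  set (M := INR m). assert (HM : INR (S a) <= M) by (apply le_INR; lia).
  assert (HM0 : 0 < M) by (pose proof (lt_0_INR (S a) ltac:(lia)); lra).
  replace (2 * m - S a)%nat with (m + b)%nat by lia.
  change (x ^ S a) with (x * x ^ a).
  destruct (Rle_lt_dec (E * x) M) as [Hsmall|Hlarge].
  - eapply Rle_trans; [|apply Rmax_l].
    replace (2 * m - 1)%nat with (m + b + a)%nat by lia.
    rewrite (pow_add M (m + b) a).
    replace (E ^ a * M ^ (m + b) * (x * x ^ a)) with (x * M ^ (m + b) * (E * x) ^ a)
      by (rewrite Rpow_mult_distr; ring).
    replace (M ^ (m + b) * M ^ a * x) with (x * M ^ (m + b) * M ^ a) by ring.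
    apply Rmult_le_compat_l; [apply Rmult_le_pos; [lra | apply pow_le; lra]|].
    apply pow_incr. split; [apply Rmult_le_pos|]; lra.
  - eapply Rle_trans; [|apply Rmax_r].
    replace (M - 1) with (INR (a + b) * 1) by (unfold M; rewrite Hb, !plus_INR, S_INR; ring).
    rewrite <- exp_pow, Rpow_mult_distr, (pow_add M m b). fold E.
    rewrite (pow_add E a b).
    replace (x ^ m) with (x * x ^ a * x ^ b) by (rewrite Hb, pow_add; simpl; ring).
    replace (E ^ a * E ^ b * (M ^ m * (x * x ^ a * x ^ b)))
      with (E ^ a * M ^ m * (x * x ^ a) * (E * x) ^ b) by (rewrite Rpow_mult_distr; ring).
    replace (E ^ a * (M ^ m * M ^ b) * (x * x ^ a))
      with (E ^ a * M ^ m * (x * x ^ a) * M ^ b) by ring.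
    apply Rmult_le_compat_l.
    + repeat apply Rmult_le_pos; try apply pow_le; lra.
    + apply pow_incr. lra.
Qed.

Lemma moment_poly_even_le (m : nat) (x : R) : (1 <= m)%nat -> 0 <= x ->
  moment_poly (2 * m) x
    <= INR m * Rmax (INR m ^ (2 * m - 1) * x) (exp (INR m - 1) * (INR m * x) ^ m).
Proof.
  intros Hm Hx. set (B := Rmax _ _).
  assert (Htrunc : moment_poly (2 * m) x
                   = sum_f_R0 (fun j => moment_coef (2 * m) j * x ^ j) m).
  { unfold moment_poly.
    rewrite <- (sum_f_R0_pad (fun j => moment_coef (2 * m) j * x ^ j) m m)
      by (intros; rewrite moment_coef_zero by lia; ring).
    f_equal; lia. }
  rewrite Htrunc, decomp_sum by lia.
  rewrite moment_coef_val, pow_i by lia.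
  apply Rle_trans with (sum_f_R0 (fun _ => B) (pred m)).
  - unfold Rdiv. rewrite !Rmult_0_l, Rplus_0_l. apply sum_Rle. intros i Hi.
    rewrite moment_coef_val by lia.
    eapply Rle_trans; [|apply (exp_pow_le_Rmax (S i) m x); [lia | exact Hx]].
    apply Rmult_le_compat_r; [now apply pow_le | apply pow_div_fact_le; lia].
  - rewrite sum_cte, Nat.succ_pred_pos by lia. right; ring.
Qed.

Lemma central_moment_even_le (n : nat) (p : R) (m : nat) : 0 <= p <= 1 -> (1 <= m)%nat ->
  central_moment n p (2 * m)
    <= INR m * Rmax (INR m ^ (2 * m - 1) * (INR n * (p * (1 - p))))
                    (exp (INR m - 1) * (INR m * (INR n * (p * (1 - p)))) ^ m).
Proof.
  intros Hp Hm. eapply Rle_trans; [apply Rle_abs|].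
  eapply Rle_trans; [now apply Rabs_central_moment_le|].
  apply moment_poly_even_le; [exact Hm|]. apply Rmult_le_pos; [apply pos_INR | nra].
Qed.

Lemma Rabs_pow_even (z : R) (m : nat) : Rabs z ^ (2 * m) = z ^ (2 * m).
Proof. now rewrite !pow_mult, pow2_abs. Qed.

Lemma binom_expect_Rabs_pow_even (n : nat) (p : R) (m : nat) :
  binom_expect n p (fun k => Rabs (INR k - INR n * p) ^ (2 * m)) = central_moment n p (2 * m).
Proof. apply binom_expect_ext. intros; apply Rabs_pow_even. Qed.

Lemma binom_expect_Rabs_pow_even_mean (n : nat) (p : R) (m : nat) : (1 <= n)%nat ->
  binom_expect n p (fun k => Rabs (INR k / INR n - p) ^ (2 * m))
    = central_moment n p (2 * m) / INR n ^ (2 * m).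
Proof.
  intros Hn. assert (HN : INR n <> 0) by (apply not_0_INR; lia).
  rewrite (binom_expect_ext _ _ _ (fun k => (INR k - INR n * p) ^ (2 * m) * / INR n ^ (2 * m))).
  - apply binom_expect_mult_r.
  - intros k. rewrite Rabs_pow_even, <- pow_inv, <- Rpow_mult_distr. f_equal. now field.
Qed.

Lemma succ_mult_pow3_le_pow4 (a : nat) : INR (S a) * 3 ^ a <= 4 ^ S a.
Proof.
  induction a as [|a IH]; [simpl; lra|].
  assert (H34 : 3 ^ S a <= 4 ^ S a) by (apply pow_incr; lra).
  rewrite S_INR. change (3 ^ S a) with (3 * 3 ^ a) in *.
  change (4 ^ S (S a)) with (4 * 4 ^ S a). nra.
Qed.

Lemma mult_exp_le_pow4 (m : nat) : (1 <= m)%nat -> INR m * exp (INR m - 1) <= 4 ^ m.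
Proof.
  intros Hm. destruct m as [|a]; [lia|].
  replace (INR (S a) - 1) with (INR a * 1) by (rewrite S_INR; ring).
  rewrite <- exp_pow.
  eapply Rle_trans; [|apply succ_mult_pow3_le_pow4].
  apply Rmult_le_compat_l; [apply pos_INR|].
  apply pow_incr. split; [left; apply exp_pos | apply exp_le_3].
Qed.

Lemma Rmax_moment_bound_div (m : nat) (N s : R) : (1 <= m)%nat -> 0 < N -> 0 <= s ->
  INR m * Rmax (INR m ^ (2 * m - 1) * (N * s)) (exp (INR m - 1) * (INR m * (N * s)) ^ m)
    / N ^ (2 * m)
  <= INR m * (INR m / N) ^ (2 * m - 1) * s
     + INR m * exp (INR m - 1) * (INR m / N) ^ m * s ^ m.
Proof.
  intros Hm HN Hs.
  pose proof (pos_INR m) as Hm0.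
  assert (HA : 0 <= INR m ^ (2 * m - 1) * (N * s))
    by (apply Rmult_le_pos; [now apply pow_le | nra]).
  assert (HB : 0 <= exp (INR m - 1) * (INR m * (N * s)) ^ m)
    by (apply Rmult_le_pos; [left; apply exp_pos | apply pow_le, Rmult_le_pos; nra]).
  set (A := INR m ^ (2 * m - 1) * (N * s)) in *.
  set (B := exp (INR m - 1) * (INR m * (N * s)) ^ m) in *.
  assert (Hmax : Rmax A B <= A + B) by (apply Rmax_lub; lra).
  apply Rle_trans with (INR m * (A + B) / N ^ (2 * m)).
  { unfold Rdiv. apply Rmult_le_compat_r; [left; apply Rinv_0_lt_compat, pow_lt, HN|].
    apply Rmult_le_compat_l; [apply pos_INR | exact Hmax]. }
  assert (HK : N ^ (2 * m) = N * N ^ (2 * m - 1))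
    by (change (N * N ^ (2 * m - 1)) with (N ^ S (2 * m - 1)); f_equal; lia).
  assert (Hmm : N ^ (2 * m) = N ^ m * N ^ m) by (rewrite <- pow_add; f_equal; lia).
  right. unfold A, B, Rdiv.
  rewrite Rmult_plus_distr_l, Rmult_plus_distr_r, HK at 1. rewrite Hmm.
  rewrite !Rpow_mult_distr, !pow_inv. field.
  repeat split; try apply pow_nonzero; lra.
Qed.

Lemma rescaled_moment_bound (m : nat) (r s delta : R) :
  (1 <= m)%nat -> 0 <= r -> 0 <= s -> 4 * r <= delta ->
  INR m * r ^ (2 * m - 1) * s + INR m * exp (INR m - 1) * r ^ m * s ^ m
    <= delta ^ m * s ^ m + delta ^ (2 * m - 1) * s.
Proof.
  intros Hm Hr Hs Hd.
  pose proof (mult_exp_le_pow4 m Hm) as H4.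
  assert (Hexp : 1 <= exp (INR m - 1)).
  { pose proof (exp_ineq1_le (INR m - 1)). pose proof (le_INR 1 m Hm). simpl in *. lra. }
  assert (Hm4 : INR m <= 4 ^ (2 * m - 1)).
  { apply Rle_trans with (4 ^ m); [pose proof (pos_INR m); nra|].
    apply Rle_pow; [lra | lia]. }
  assert (Hpow : forall k, r ^ k * 4 ^ k <= delta ^ k)
    by (intros k; rewrite <- Rpow_mult_distr; apply pow_incr; lra).
  assert (Hsm : 0 <= s ^ m) by now apply pow_le.
  rewrite Rplus_comm. apply Rplus_le_compat.
  - apply Rle_trans with (r ^ m * 4 ^ m * s ^ m).
    + replace (INR m * exp (INR m - 1) * r ^ m * s ^ m)
        with (r ^ m * (INR m * exp (INR m - 1)) * s ^ m) by ring.
      apply Rmult_le_compat_r; [exact Hsm|].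
      apply Rmult_le_compat_l; [now apply pow_le | exact H4].
    + apply Rmult_le_compat_r; [exact Hsm | apply Hpow].
  - apply Rle_trans with (r ^ (2 * m - 1) * 4 ^ (2 * m - 1) * s).
    + replace (INR m * r ^ (2 * m - 1) * s) with (r ^ (2 * m - 1) * INR m * s) by ring.
      apply Rmult_le_compat_r; [exact Hs|].
      apply Rmult_le_compat_l; [now apply pow_le | exact Hm4].
    + apply Rmult_le_compat_r; [exact Hs | apply Hpow].
Qed.

Theorem lemma17 (p : R) (m n : nat) :
  0 <= p <= 1 -> (1 <= m)%nat -> (1 <= n)%nat ->
  let q := 1 - p in
  binom_expect n p (fun k => Rabs (INR k - INR n * p) ^ (2 * m))
    <= INR m * Rmax (INR m ^ (2 * m - 1) * (INR n * p * q))
                    (exp (INR m - 1) * (INR m * INR n * p * q) ^ m)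
  /\
  (forall delta : R, 0 < delta <= 1 -> INR n >= 4 * INR m / delta ->
     binom_expect n p (fun k => Rabs (INR k / INR n - p) ^ (2 * m))
       <= delta ^ m * (p * q) ^ m + delta ^ (2 * m - 1) * (p * q)).
Proof.
  intros Hp Hm Hn q.
  assert (HN : 0 < INR n) by (apply lt_0_INR; lia).
  assert (Hs : 0 <= p * q) by (unfold q; nra).
  pose proof (central_moment_even_le n p m Hp Hm) as Hmom. fold q in Hmom.
  split.
  - rewrite binom_expect_Rabs_pow_even.
    replace (INR n * p * q) with (INR n * (p * q)) by ring.
    replace (INR m * INR n * p * q) with (INR m * (INR n * (p * q))) by ring.
    exact Hmom.
  - intros delta Hd Hdn.
    assert (Hratio : 4 * (INR m / INR n) <= delta).
    { apply Rge_le, (Rmult_le_compat_l delta) in Hdn; [|lra].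
      replace (delta * (4 * INR m / delta)) with (4 * INR m) in Hdn by (field; lra).
      apply (Rmult_le_reg_r (INR n)); [exact HN|].
      replace (4 * (INR m / INR n) * INR n) with (4 * INR m) by (field; lra). lra. }
    rewrite binom_expect_Rabs_pow_even_mean by exact Hn.
    eapply Rle_trans.
    { apply Rmult_le_compat_r; [left; apply Rinv_0_lt_compat, pow_lt, HN | exact Hmom]. }
    eapply Rle_trans; [apply Rmax_moment_bound_div; assumption|].
    apply rescaled_moment_bound; [exact Hm | | exact Hs | exact Hratio].
    apply Rmult_le_pos; [apply pos_INR | left; now apply Rinv_0_lt_compat].
Qed.
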